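(* Let $G$ and $H$ be two graphs of orders $m$ and $n$ respectively such that $E(G)\neq\emptyset$ and $E(H)\neq\emptyset$. Then $\chi_{ei}(G\vee H)=m+n$.
   Context: All graphs are finite and simple. A path $P_4$ in $G$ is a sequence $uxyv$ of four distinct vertices with $ux,xy,yv\in E(G)$; $u,v$ are its end vertices. An $e$-injective $k$-coloring of $G$ is a function $f:V(G)\to\{1,\dots,k\}$ with $f(u)\ne f(v)$ whenever $u,v$ are the end vertices of some path $P_4$ in $G$; $\chi_{ei}(G)$ is the least such $k$. The join $G\vee H$ is the graph obtained from the disjoint union of $G$ and $H$ by adding all edges $xy$ with $x\in V(G)$, $y\in V(H)$. *)

From mathcomp Require Import all_boot.
Set Implicit Arguments. Unset Strict Implicit. Unset Printing Implicit Defensive.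

Record sgraph (V : finType) := SGraph {
  adj : rel V;
  adj_sym : symmetric adj;
  adj_irr : irreflexive adj }.

Definition has_edge (V : finType) (G : sgraph V) : Prop :=
  exists x y : V, adj G x y.

Definition P4_ends (V : finType) (G : sgraph V) (u v : V) : bool :=
  [exists x : V, exists y : V,
     [&& uniq [:: u; x; y; v], adj G u x, adj G x y & adj G y v]].

(* e-injective k-coloring; the colors {1,...,k} are represented by 'I_k *)
Definition ei_coloring (V : finType) (G : sgraph V) (k : nat) (f : {ffun V -> 'I_k}) : bool :=
  [forall u : V, forall v : V, P4_ends G u v ==> (f u != f v)].

Definition ei_colorable (V : finType) (G : sgraph V) (k : nat) : bool :=
  [exists f : {ffun V -> 'I_k}, ei_coloring G f].

Lemma ei_colorable_ex (V : finType) (G : sgraph V) : exists k, ei_colorable G k.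
Proof.
exists #|V|; apply/existsP; exists [ffun v => enum_rank v].
apply/forallP => u; apply/forallP => v; apply/implyP => /existsP [x /existsP [y]].
case/and4P => Hu _ _ _; rewrite !ffunE; apply/negP => /eqP /enum_rank_inj Huv.
by move: Hu; rewrite Huv /= !inE eqxx /= !orbT.
Qed.

Definition chi_ei (V : finType) (G : sgraph V) : nat :=
  ex_minn (ei_colorable_ex G).
Definition join_adj (V1 V2 : finType) (G : sgraph V1) (H : sgraph V2) : rel (V1 + V2)%type :=
  fun a b => match a, b with
  | inl x, inl y => adj G x y
  | inr x, inr y => adj H x y
  | _, _ => true
  end.

Lemma join_adj_sym (V1 V2 : finType) (G : sgraph V1) (H : sgraph V2) :
  symmetric (join_adj G H).
Proof. by case=> x [] y //=; apply: adj_sym. Qed.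

Lemma join_adj_irr (V1 V2 : finType) (G : sgraph V1) (H : sgraph V2) :
  irreflexive (join_adj G H).
Proof. by case=> x /=; apply: adj_irr. Qed.

Definition sjoin (V1 V2 : finType) (G : sgraph V1) (H : sgraph V2) : sgraph (V1 + V2)%type :=
  SGraph (join_adj_sym G H) (join_adj_irr G H).

(* Any two distinct vertices of the join are the ends of a P4: two vertices
   on the same side are joined through an edge of the other side, and
   vertices u, v on opposite sides through u w z v, with w on v's side and
   z on u's side, w != v and z != u.  So every e-injective coloring is
   injective, while the identity coloring is e-injective. *)
From mathcomp Require Import all_boot.

Set Implicit Arguments.
Unset Strict Implicit.
Unset Printing Implicit Defensive.

Section EInjectiveColoring.

Variables (V : finType) (G : sgraph V).

Lemma P4_endsI (u x y v : V) :
  uniq [:: u; x; y; v] -> adj G u x -> adj G x y -> adj G y v -> P4_ends G u v.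
Proof.
by move=> uniq_uxyv ux xy yv; apply/existsP; exists x; apply/existsP; exists y;
  apply/and4P.
Qed.

Lemma P4_ends_neq (u v : V) : P4_ends G u v -> u != v.
Proof.
case/existsP=> x /existsP [y /and4P [uniq_uxyv _ _ _]].
by apply: contraTneq uniq_uxyv => ->; rewrite /= !inE eqxx !orbT.
Qed.

Lemma P4_ends_sym (u v : V) : P4_ends G u v -> P4_ends G v u.
Proof.
case/existsP=> x /existsP [y /and4P [uniq_uxyv ux xy yv]].
apply: (P4_endsI (x := y) (y := x)); rewrite 1?adj_sym //.
by rewrite -rev_uniq in uniq_uxyv.
Qed.

Lemma ei_coloring_enum_rank : ei_coloring G [ffun v => enum_rank v].
Proof.
apply/forallP=> u; apply/forallP=> v; apply/implyP=> /P4_ends_neq.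
by rewrite !ffunE; apply: contraNneq => /enum_rank_inj ->.
Qed.

Lemma chi_ei_le_card : chi_ei G <= #|V|.
Proof.
rewrite /chi_ei; case: ex_minnP => k _; apply.
by apply/existsP; exists [ffun v => enum_rank v]; apply: ei_coloring_enum_rank.
Qed.

Hypothesis P4_ends_all : forall u v : V, u != v -> P4_ends G u v.

Lemma ei_coloring_inj k (f : {ffun V -> 'I_k}) : ei_coloring G f -> injective f.
Proof.
move=> /forallP f_ei u v fu_fv; apply/eqP; apply: contraT => u_neq_v.
by move: (f_ei u) => /forallP /(_ v); rewrite P4_ends_all // fu_fv eqxx.
Qed.

Lemma chi_ei_P4_complete : chi_ei G = #|V|.
Proof.
apply/eqP; rewrite eqn_leq chi_ei_le_card /chi_ei.
case: ex_minnP => k /existsP [f /ei_coloring_inj f_inj] _.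
by rewrite -[X in _ <= X]card_ord (leq_card f f_inj).
Qed.

End EInjectiveColoring.

Lemma adj_neq (V : finType) (G : sgraph V) (x y : V) : adj G x y -> x != y.
Proof. by apply: contraTneq => ->; rewrite adj_irr. Qed.

Lemma has_edge_other (V : finType) (G : sgraph V) (z : V) :
  has_edge G -> exists w, w != z.
Proof.
case=> x [y xy]; have [<-|] := eqVneq x z; last by exists x.
by exists y; rewrite eq_sym (adj_neq xy).
Qed.

Section Join.

Variables (V1 V2 : finType) (G : sgraph V1) (H : sgraph V2).
Hypotheses (G_edge : has_edge G) (H_edge : has_edge H).

Lemma P4_ends_join_inl (u v : V1) : u != v -> P4_ends (sjoin G H) (inl u) (inl v).
Proof.
move=> u_neq_v; case: H_edge => x [y xy].
apply: (P4_endsI (x := inr x) (y := inr y)) => //=.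
by rewrite !inE -!sum_eqE /= ?orbF u_neq_v (adj_neq xy).
Qed.

Lemma P4_ends_join_inr (u v : V2) : u != v -> P4_ends (sjoin G H) (inr u) (inr v).
Proof.
move=> u_neq_v; case: G_edge => x [y xy].
apply: (P4_endsI (x := inl x) (y := inl y)) => //=.
by rewrite !inE -!sum_eqE /= ?orbF u_neq_v (adj_neq xy).
Qed.

Lemma P4_ends_join_inlr (u : V1) (v : V2) : P4_ends (sjoin G H) (inl u) (inr v).
Proof.
have [w w_neq_v] := has_edge_other v H_edge.
have [z z_neq_u] := has_edge_other u G_edge.
apply: (P4_endsI (x := inr w) (y := inl z)) => //=.
by rewrite !inE -!sum_eqE /= ?orbF w_neq_v eq_sym z_neq_u.
Qed.

Lemma P4_ends_join (u v : V1 + V2) : u != v -> P4_ends (sjoin G H) u v.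
Proof.
case: u v => [u|u] [v|v] u_neq_v.
- by apply: P4_ends_join_inl; rewrite -(inj_eq (@inl_inj _ V2)).
- exact: P4_ends_join_inlr.
- exact/P4_ends_sym/P4_ends_join_inlr.
- by apply: P4_ends_join_inr; rewrite -(inj_eq (@inr_inj V1 _)).
Qed.

End Join.

Theorem proposition2p6 (V1 V2 : finType) (G : sgraph V1) (H : sgraph V2)
  (m n : nat) (hm : #|V1| = m) (hn : #|V2| = n) :
  has_edge G -> has_edge H -> chi_ei (sjoin G H) = m + n.
Proof.
move=> G_edge H_edge; rewrite -hm -hn -card_sum.
exact/chi_ei_P4_complete/P4_ends_join.
Qed.
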